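(* A finite order $P$ has property (itov) if and only if all of the following hold: (1) $P$ has a relatively maximum full trunk $R$; (2) the induced suborder on $\mathrm{Dom}(P)\setminus R$ has property (itov); (3) every element of $\mathrm{Dom}(P)\setminus R$ is regular to $R$; (4) there is no induced suborder of $P$ isomorphic to $O_{obs1}$ or $O_{obs2}$ whose domain meets both $R$ and $\mathrm{Dom}(P)\setminus R$ and has at least two elements in $\mathrm{Dom}(P)\setminus R$.
   Context: Orders are partial orders; $x\sim y$ means $x\ne y$ and $x,y$ incomparable. $O_{obs1}$ is the order on $\{a,b,c,d\}$ whose only comparabilities are $a<b$, $c<d$; $O_{obs2}$ is the order on $\{a,b,c,d\}$ whose only comparabilities are $a<b$, $c<d$, $c<b$. Property (itov): no induced suborder isomorphic to $O_{obs1}$ or $O_{obs2}$. A trunk of $P$ is a subset $T$ such that for pairwise distinct $x,y,z\in T$, $x\sim y$ and $y\sim z$ imply $x\sim z$; $y,z\in T$ lie in the same $T$-level iff $y=z$ or $y\sim z$. A chain is maximum if it has maximum cardinality among chains of $P$; a full trunk is a trunk containing a maximum chain; a relatively maximum full trunk is a full trunk that is the unique inclusion-maximal full trunk. An element $x$ is regular to a trunk $T$ if for all $y,z\in T$ in the same $T$-level: $x<y\iff x<z$, $x>y\iff x>z$, and ($x\sim y$ or $x=y$) $\iff$ ($x\sim z$ or $x=z$). *)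

(* A finite order P is a finPOrderType T (domain = all of T).
   Induced suborders are handled via subsets A : {set T}. *)
From HB Require Import structures.
From mathcomp Require Import all_boot all_order.
Set Implicit Arguments. Unset Strict Implicit. Unset Printing Implicit Defensive.
Import Order.Theory.
Local Open Scope order_scope.

Section Defs.
Context {disp : Order.disp_t} {T : finPOrderType disp}.

Definition incomp (x y : T) : bool := (x != y) && ~~ (x >=< y).

(* a,b,c,d (pairwise distinct) induce a suborder isomorphic to O_obs1
   via a|->a, b|->b, c|->c, d|->d: only comparabilities a<b, c<d *)
Definition is_obs1 (a b c d : T) : bool :=
  [&& uniq [:: a; b; c; d], a < b, c < d,
      incomp a c, incomp a d, incomp b c & incomp b d].

(* O_obs2: only comparabilities a<b, c<d, c<b *)
Definition is_obs2 (a b c d : T) : bool :=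
  [&& uniq [:: a; b; c; d], a < b, c < d, c < b,
      incomp a c, incomp a d & incomp b d].

Definition obs_set (S : {set T}) : Prop :=
  exists a b c d : T, S = [set a; b; c; d] /\ (is_obs1 a b c d || is_obs2 a b c d).

Definition itov (A : {set T}) : Prop :=
  ~ exists S : {set T}, S \subset A /\ obs_set S.

Definition trunk (R : {set T}) : Prop :=
  forall x y z, x \in R -> y \in R -> z \in R -> x != z ->
    incomp x y -> incomp y z -> incomp x z.

Definition chain (C : {set T}) : Prop :=
  forall x y, x \in C -> y \in C -> x >=< y.

Definition max_chain (C : {set T}) : Prop :=
  chain C /\ forall C', chain C' -> #|C'| <= #|C|.

Definition full_trunk (R : {set T}) : Prop :=
  trunk R /\ exists C, max_chain C /\ C \subset R.

Definition incl_max_full_trunk (R : {set T}) : Prop :=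
  full_trunk R /\ forall R', full_trunk R' -> R \subset R' -> R' = R.

Definition rel_max_full_trunk (R : {set T}) : Prop :=
  incl_max_full_trunk R /\ forall R', incl_max_full_trunk R' -> R' = R.

Definition same_level (y z : T) : bool := (y == z) || incomp y z.

Definition regular (x : T) (R : {set T}) : Prop :=
  forall y z, y \in R -> z \in R -> same_level y z ->
    [/\ (x < y) = (x < z), (y < x) = (z < x)
      & (incomp x y || (x == y)) = (incomp x z || (x == z))].

End Defs.

From mathcomp Require Import all_boot all_order.
From mathcomp Require Import zify.
Set Implicit Arguments. Unset Strict Implicit. Unset Printing Implicit Defensive.
Import Order.Theory.
Local Open Scope order_scope.

(* An obstruction S (a copy of O_obs1 or O_obs2) is never
   a trunk, and each of its points x is irregular to S minus x.  Conditions
   (2) and (4) force every obstruction to have at most one point outside R;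
   if it has none it sits in the trunk R, if it has one, that point is
   irregular to R.  Both are impossible.

   Let the spine be the set of points lying on some
   maximum chain, i.e. the x with  below x + above x + 1 = height,  where
   below x / above x are the longest chain lengths strictly below / above x.
   Under (itov) the function  below  is strictly monotone along the spine
   and constant on incomparable spine points; this makes the spine a trunk to
   which every outside point is regular.  Every full trunk is contained in the
   spine, so the spine is the relatively maximum full trunk; (2) and (4) are
   inherited from (itov) of the whole order. *)

Section Theorem5.
Context {disp : Order.disp_t} {T : finPOrderType disp}.
Implicit Types (a b c d e x y z : T) (A B C R S : {set T}).

Lemma incompE x y : incomp x y = [&& x != y, ~~ (x < y) & ~~ (y < x)].
Proof.
rewrite /incomp /Order.comparable !le_eqVlt eq_sym.
by case: eqVneq => //= _; rewrite negb_or.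
Qed.

Lemma incompC x y : incomp x y = incomp y x.
Proof. by rewrite !incompE eq_sym; case: (_ < _); case: (_ < _); rewrite ?andbF. Qed.

Lemma incomp_lt x y : incomp x y -> (x < y) = false.
Proof. by rewrite incompE => /and3P[_ /negbTE]. Qed.

Lemma incomp_gt x y : incomp x y -> (y < x) = false.
Proof. by rewrite incompE => /and3P[_ _ /negbTE]. Qed.

Lemma incomp_neq x y : incomp x y -> (x == y) = false.
Proof. by rewrite incompE => /and3P[/negbTE]. Qed.

Lemma ncomparable_incomp x y : ~~ (x >=< y) -> incomp x y.
Proof.
move=> nxy; rewrite /incomp nxy andbT.
by apply: contraNneq nxy => ->; rewrite comparablexx.
Qed.

Lemma incompI x y : x != y -> ~~ (x < y) -> ~~ (y < x) -> incomp x y.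
Proof. by move=> *; rewrite incompE; apply/and3P. Qed.

(* Under (itov) of the whole order the two obstruction patterns cannot occur;
   the distinctness required by [is_obs1]/[is_obs2] follows from the relations. *)
Lemma no_obs1 a b c d : itov [set: T] -> a < b -> c < d ->
  incomp a c -> incomp a d -> incomp b c -> incomp b d -> False.
Proof.
move=> Hi ab cd ac ad bc bd; apply: Hi; exists [set a; b; c; d].
split; first exact: subsetT.
exists a, b, c, d; split=> //; rewrite /is_obs1 ab cd ac ad bc bd /= !inE !negb_or.
by rewrite (lt_eqF ab) (lt_eqF cd) !incomp_neq.
Qed.

Lemma no_obs2 a b c d : itov [set: T] -> a < b -> c < d -> c < b ->
  incomp a c -> incomp a d -> incomp b d -> False.
Proof.
move=> Hi ab cd cb ac ad bd; apply: Hi; exists [set a; b; c; d].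
split; first exact: subsetT.
exists a, b, c, d; split=> //; rewrite /is_obs2 ab cd cb ac ad bd /= !inE !negb_or.
by rewrite (lt_eqF ab) (lt_eqF cd) (gt_eqF cb) !incomp_neq ?orbT.
Qed.

Lemma trunk_sub S R : S \subset R -> trunk R -> trunk S.
Proof. by move=> /subsetP SR tR x y z /SR xR /SR yR /SR zR; apply: tR. Qed.

Lemma obs_not_trunk S : obs_set S -> ~ trunk S.
Proof.
case=> [a [b [c [d [-> /orP[]]]]]] /and5P[_ ab cd].
- move=> ac /and3P[_ bc _] tS.
  rewrite incompC in bc; have := tS a c b.
  rewrite !inE !eqxx ?orbT /= (lt_eqF ab).
  by move=> /(_ isT isT isT isT ac bc)/incomp_lt; rewrite ab.
- move=> cb /and3P[ac ad _] tS.
  rewrite incompC in ad; have := tS d a c.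
  rewrite !inE !eqxx ?orbT /= (gt_eqF cd).
  by move=> /(_ isT isT isT isT ad ac)/incomp_gt; rewrite cd.
Qed.

Lemma irregular_below x y z R : y \in R -> z \in R -> incomp y z ->
  x < y -> ~~ (x < z) -> ~ regular x R.
Proof.
move=> yR zR yz xy xz reg; have := reg y z yR zR.
rewrite /same_level yz orbT xy.
by case/(_ isT) => e; rewrite -e in xz.
Qed.

Lemma irregular_above x y z R : y \in R -> z \in R -> incomp y z ->
  y < x -> ~~ (z < x) -> ~ regular x R.
Proof.
move=> yR zR yz yx zx reg; have := reg y z yR zR.
rewrite /same_level yz orbT yx.
by case/(_ isT) => _ e; rewrite -e in zx.
Qed.

Lemma setD1_sub S x R u : S :\ x \subset R -> u != x -> u \in S -> u \in R.
Proof. by move=> /subsetP sub ux uS; apply: sub; rewrite in_setD1 ux. Qed.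

(* The witnesses
   y ~ z are (b,c), (a,d), (d,a), (c,b) for the points a, b, c, d of O_obs1
   and (b,d), (a,d), (d,a), (c,a) for those of O_obs2. *)
Lemma obs_irregular S x R : obs_set S -> x \in S -> S :\ x \subset R ->
  ~ regular x R.
Proof.
case=> [a [b [c [d [-> o]]]]]; rewrite !inE -!orbA => xS.
have [aS bS cS dS] : [/\ a \in [set a; b; c; d], b \in [set a; b; c; d],
  c \in [set a; b; c; d] & d \in [set a; b; c; d]] by rewrite !inE !eqxx !orbT.
have : uniq [:: a; b; c; d] by case/orP: (o) => /andP[].
rewrite /= !inE !negb_or => /and4P[/and3P[nab nac nad] /andP[nbc nbd] ncd _].
move: xS; case/orP: o => /and5P[_ ab cd].
- move=> ac /and3P[ad bc bd] /or4P[]/eqP-> sub.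
  + apply: (irregular_below (setD1_sub sub _ bS) (setD1_sub sub _ cS) bc ab);
      by rewrite ?(incomp_lt ac) // eq_sym.
  + apply: (irregular_above (setD1_sub sub _ aS) (setD1_sub sub _ dS) ad ab);
      by rewrite ?(incomp_gt bd) // eq_sym.
  + apply: (irregular_below (setD1_sub sub _ dS) (setD1_sub sub _ aS) _ cd);
      by rewrite ?(incomp_gt ac) ?(incompC d) // eq_sym.
  + apply: (irregular_above (setD1_sub sub _ cS) (setD1_sub sub _ bS) _ cd);
      by rewrite ?(incomp_lt bd) ?(incompC c) // eq_sym.
- move=> cb /and3P[ac ad bd] /or4P[]/eqP-> sub.
  + apply: (irregular_below (setD1_sub sub _ bS) (setD1_sub sub _ dS) bd ab);
      by rewrite ?(incomp_lt ad) // eq_sym.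
  + apply: (irregular_above (setD1_sub sub _ aS) (setD1_sub sub _ dS) ad ab);
      by rewrite ?(incomp_gt bd) // eq_sym.
  + apply: (irregular_below (setD1_sub sub _ dS) (setD1_sub sub _ aS) _ cd);
      by rewrite ?(incomp_gt ac) ?(incompC d) // eq_sym.
  + apply: (irregular_above (setD1_sub sub _ cS) (setD1_sub sub _ aS) _ cd);
      by rewrite ?(incomp_lt ad) ?(incompC c) // eq_sym.
Qed.

Lemma obs_outside_le1 R S : itov (~: R) ->
  ~ (exists S, [/\ obs_set S, S :&: R != set0 & (1 < #|S :\: R|)%N]) ->
  obs_set S -> (#|S :\: R| <= 1)%N.
Proof.
move=> itovC no_mixed oS; rewrite leqNgt; apply/negP => many.
have [SR0|SR] := boolP (S :&: R == set0).
  by apply: itovC; exists S; rewrite -disjoints_subset -setI_eq0.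
by apply: no_mixed; exists S.
Qed.

Lemma no_obs_near_trunk R S : trunk R -> (forall x, x \in ~: R -> regular x R) ->
  (#|S :\: R| <= 1)%N -> ~ obs_set S.
Proof.
move=> tR regR out1 oS.
have [SR|/subsetPn[x xS xR]] := boolP (S \subset R).
  exact: obs_not_trunk oS (trunk_sub SR tR).
apply: (obs_irregular oS xS _ (regR x _)); last by rewrite inE.
apply/subsetP => y; rewrite in_setD1 => /andP[yx yS]; apply: contraR yx => yR.
by apply/eqP; apply: (card_le1_eqP out1); rewrite inE ?yR ?xR.
Qed.

Definition chainb C := [forall x in C, [forall y in C, x >=< y]].

Lemma chainP C : reflect (chain C) (chainb C).
Proof.
apply: (iffP forall_inP) => [H x y xC yC | H x xC].
  by move/forall_inP: (H x xC); apply.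
by apply/forall_inP => y yC; apply: H.
Qed.

Lemma chainb0 : chainb set0.
Proof. by apply/forall_inP => x; rewrite inE. Qed.

Lemma chainb1 x : chainb [set x].
Proof.
by apply/chainP => a b; rewrite !inE => /eqP-> /eqP->; rewrite comparablexx.
Qed.

Lemma chainb_sub A C : A \subset C -> chainb C -> chainb A.
Proof. by move=> /subsetP AC /chainP cC; apply/chainP => a b /AC aC /AC; apply: cC. Qed.

Lemma chainbU A B : chainb A -> chainb B ->
  (forall a b, a \in A -> b \in B -> a >=< b) -> chainb (A :|: B).
Proof.
move=> /chainP cA /chainP cB AB; apply/chainP => a b; rewrite !inE.
case/orP=> [aA|aB] /orP[bA|bB]; [exact: cA | exact: AB | | exact: cB].
by rewrite comparable_sym; apply: AB.
Qed.

Definition height := (\max_(C | chainb C) #|C|)%N.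
Definition chain_below x C := chainb C && [forall c in C, c < x].
Definition chain_above x C := chainb C && [forall c in C, x < c].
Definition ht_below x := (\max_(C | chain_below x C) #|C|)%N.
Definition ht_above x := (\max_(C | chain_above x C) #|C|)%N.

(* The spine: the points lying on a maximum chain ([max_chain_spine]); it will
   be the relatively maximum full trunk. *)
Definition spine := [set x | (ht_below x + ht_above x + 1 == height)%N].

Lemma spine_height x : x \in spine -> (ht_below x + ht_above x + 1)%N = height.
Proof. by rewrite inE => /eqP. Qed.

Lemma le_height C : chainb C -> (#|C| <= height)%N.
Proof. exact: (leq_bigmax_cond (F := fun C : {set T} => #|C|)). Qed.

Lemma le_ht_below x C : chain_below x C -> (#|C| <= ht_below x)%N.
Proof. exact: (leq_bigmax_cond (F := fun C : {set T} => #|C|)). Qed.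

Lemma le_ht_above x C : chain_above x C -> (#|C| <= ht_above x)%N.
Proof. exact: (leq_bigmax_cond (F := fun C : {set T} => #|C|)). Qed.

Lemma bigmax_witness (P : pred {set T}) : P set0 ->
  exists2 C, P C & #|C| = (\max_(C | P C) #|C|)%N.
Proof.
move=> P0; have [|C PC ->] := eq_bigmax_cond (fun C : {set T} => #|C|) (A := P).
  by apply/card_gt0P; exists set0.
by exists C.
Qed.

Lemma height_witness : exists2 C, chainb C & #|C| = height.
Proof. exact: (bigmax_witness chainb0). Qed.

Lemma below_witness x : exists2 C, chain_below x C & #|C| = ht_below x.
Proof. by apply: bigmax_witness; rewrite /chain_below chainb0; apply/forall_inP => c; rewrite inE. Qed.

Lemma above_witness x : exists2 C, chain_above x C & #|C| = ht_above x.
Proof. by apply: bigmax_witness; rewrite /chain_above chainb0; apply/forall_inP => c; rewrite inE. Qed.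

(* A chain below x, the point x and a chain above x form a chain. *)
Lemma through_le_height x B A : chain_below x B -> chain_above x A ->
  (#|B| + #|A| + 1 <= height)%N.
Proof.
move=> /andP[cB /forall_inP Bx] /andP[cA /forall_inP Ax].
have xA : x \notin A by apply/negP => /Ax; rewrite ltxx.
have disj : B :&: (x |: A) = set0.
  apply/setP => c; rewrite !inE; apply/negP => /andP[/Bx cx /orP[/eqP ce|/Ax xc]].
    by move: cx; rewrite ce ltxx.
  by move: (lt_trans cx xc); rewrite ltxx.
have <- : #|B :|: (x |: A)| = (#|B| + #|A| + 1)%N.
  by rewrite cardsU disj cards0 cardsU1 xA /=; lia.
apply: le_height; apply: chainbU => [//||a b /Bx ax].
- apply: chainbU (chainb1 x) cA _ => a b; rewrite inE => /eqP-> /Ax.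
  exact: lt_comparable.
- rewrite !inE => /orP[/eqP->|/Ax xb]; first exact: lt_comparable.
  exact: lt_comparable (lt_trans ax xb).
Qed.

Lemma ht_sum_le x : (ht_below x + ht_above x + 1 <= height)%N.
Proof.
case: (below_witness x) (above_witness x) => B xB <- [A xA <-].
exact: (through_le_height xB xA).
Qed.

Lemma in_spine x B A : chain_below x B -> chain_above x A ->
  (height <= #|B| + #|A| + 1)%N -> x \in spine.
Proof.
move=> xB xA hle; rewrite inE eqn_leq ht_sum_le /=.
by apply: leq_trans hle _; rewrite leq_add2r leq_add ?le_ht_below ?le_ht_above.
Qed.

Lemma chain_split C c : chainb C -> c \in C ->
  (#|C| <= #|[set b in C | (b < c)%O]| + #|[set b in C | (c < b)%O]| + 1)%N.
Proof.
move=> /chainP cC cIn.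
have sub : C \subset [set b in C | b < c] :|: (c |: [set b in C | c < b]).
  apply/subsetP => b bC; have := cC b c bC cIn.
  by case/comparable_ltgtP=> [bc|cb|->]; rewrite !inE ?bC ?bc ?cb ?eqxx ?orbT.
apply: leq_trans (subset_leq_card sub) _.
have := (leq_card_setU [set b in C | b < c] (c |: [set b in C | c < b])).1.
by rewrite cardsU1; have := leq_b1 (c \notin [set b in C | c < b]); lia.
Qed.

Lemma chain_part_below C c x : chainb C ->
  (forall b, b \in C -> b < c -> b < x) -> chain_below x [set b in C | b < c].
Proof.
move=> cC bx; rewrite /chain_below (chainb_sub _ cC); last first.
  by apply/subsetP => b; rewrite inE => /andP[].
by apply/forall_inP => b; rewrite inE => /andP[]; apply: bx.
Qed.

Lemma chain_part_above C c x : chainb C ->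
  (forall b, b \in C -> c < b -> x < b) -> chain_above x [set b in C | c < b].
Proof.
move=> cC xb; rewrite /chain_above (chainb_sub _ cC); last first.
  by apply/subsetP => b; rewrite inE => /andP[].
by apply/forall_inP => b; rewrite inE => /andP[]; apply: xb.
Qed.

Lemma max_chain_spine C x : chainb C -> #|C| = height -> x \in C -> x \in spine.
Proof.
move=> cC hC xC.
apply: (in_spine (chain_part_below (c := x) cC _) (chain_part_above (c := x) cC _)) => //.
by rewrite -hC chain_split.
Qed.

Lemma lt_ht_below x y : x < y -> (ht_below x < ht_below y)%N.
Proof.
move=> xy; case: (below_witness x) => D /andP[cD /forall_inP Dx] <-.
have xD : x \notin D by apply/negP => /Dx; rewrite ltxx.
suff /le_ht_below : chain_below y (x |: D) by rewrite cardsU1 xD.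
rewrite /chain_below chainbU ?chainb1 //=; last first.
  by move=> a b; rewrite inE => /eqP-> /Dx /gt_comparable.
by apply/forall_inP => c; rewrite !inE => /orP[/eqP->//|/Dx cx]; apply: lt_trans cx xy.
Qed.

Lemma lt_ht_above x y : x < y -> (ht_above y < ht_above x)%N.
Proof.
move=> xy; case: (above_witness y) => D /andP[cD /forall_inP Dy] <-.
have yD : y \notin D by apply/negP => /Dy; rewrite ltxx.
suff /le_ht_above : chain_above x (y |: D) by rewrite cardsU1 yD.
rewrite /chain_above chainbU ?chainb1 //=; last first.
  by move=> a b; rewrite inE => /eqP-> /Dy /lt_comparable.
by apply/forall_inP => c; rewrite !inE => /orP[/eqP->//|/Dy yc]; apply: lt_trans xy yc.
Qed.

Lemma below_escape x z : (ht_below x < ht_below z)%N -> ~~ (x < z) ->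
  exists2 e, e < z & incomp e x.
Proof.
move=> hxz nxz; case: (below_witness z) => D /andP[cD /forall_inP Dz] hD.
have [allx|/forall_inPn [e eD nex]] := boolP [forall c in D, c < x].
  by have := le_ht_below (introT andP (conj cD allx)); rewrite hD leqNgt hxz.
have ez := Dz _ eD; exists e => //; apply: (incompI _ nex).
  by apply: contraNneq nxz => exe; rewrite -exe.
by apply: contraNN nxz => xe; apply: lt_trans xe ez.
Qed.

Lemma above_escape x z : (ht_above z < ht_above x)%N -> ~~ (x < z) ->
  exists2 c, x < c & incomp c z.
Proof.
move=> hzx nxz; case: (above_witness x) => U /andP[cU /forall_inP Ux] eU.
have [allz|/forall_inPn [c cIn nzc]] := boolP [forall c in U, z < c].
  by have := le_ht_above (introT andP (conj cU allz)); rewrite eU leqNgt hzx.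
have xc := Ux _ cIn; exists c => //; apply: (incompI _ _ nzc).
  by apply: contraNneq nxz => <-.
by apply: contraNN nxz => cz; apply: lt_trans xc cz.
Qed.

Lemma max_chain_height C : max_chain C -> chainb C /\ #|C| = height.
Proof.
case=> /chainP cC maxC; split=> //; apply/eqP; rewrite eqn_leq le_height //=.
by case: height_witness => C' /chainP cC' <-; apply: maxC.
Qed.

Lemma trunk_chain_comparable R C z c b : trunk R -> chainb C -> C \subset R ->
  z \in R -> c \in C -> incomp z c -> b \in C -> b != c -> b >=< z.
Proof.
move=> tR /chainP cC /subsetP CR zR cC' izc bC nbc; apply: contraT => nbz.
have := tR b z c (CR b bC) zR (CR c cC') nbc (ncomparable_incomp nbz) izc.
by rewrite /incomp (cC b c bC cC') andbF.
Qed.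

(* Every full trunk is contained in the spine: a point z of the trunk off a
   maximum chain C is incomparable to some c of C, and then the parts of C
   below and above c lie below and above z. *)
Lemma full_trunk_sub_spine R : full_trunk R -> R \subset spine.
Proof.
case=> tR [C [/max_chain_height [cC hC] CR]]; apply/subsetP => z zR.
have [zC|nzC] := boolP (z \in C); first exact: max_chain_spine cC hC zC.
have [allc|/forall_inPn [c cIn nzc]] := boolP [forall c in C, z >=< c].
  have : chainb (z |: C).
    apply: chainbU (chainb1 z) cC _ => a b; rewrite inE => /eqP-> bC.
    by move/forall_inP: allc; apply.
  by move/le_height; rewrite cardsU1 nzC hC ltnn.
have izc := ncomparable_incomp nzc.
have cmp b : b \in C -> b != c -> b >=< z.
  exact: (trunk_chain_comparable tR cC CR zR cIn izc).
have below b : b \in C -> b < c -> b < z.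
  move=> bC bc; case/comparable_ltgtP: (cmp b bC (negbT (lt_eqF bc))) => // [zb|ebz].
    by move: (incomp_lt izc); rewrite (lt_trans zb bc).
  by move: (incomp_lt izc); rewrite -ebz bc.
have above b : b \in C -> c < b -> z < b.
  move=> bC cb; case/comparable_ltgtP: (cmp b bC (negbT (gt_eqF cb))) => // [bz|ebz].
    by move: (incomp_gt izc); rewrite (lt_trans cb bz).
  by move: (incomp_gt izc); rewrite -ebz cb.
apply: (in_spine (chain_part_below cC below) (chain_part_above cC above)).
by rewrite -hC chain_split.
Qed.

Section Itov.
Hypothesis Hitov : itov [set: T].

(* On the spine a smaller ht_below forces x < y: otherwise a point e < y
   incomparable to x and a point c > x incomparable to y (from the two escape
   lemmas) complete an obstruction. *)
Lemma spine_lt x y : x \in spine -> y \in spine ->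
  (ht_below x < ht_below y)%N -> x < y.
Proof.
move=> xS yS hxy; apply: contraT => nxy; exfalso.
have nyx : ~~ (y < x) by apply: contraTN hxy => /lt_ht_below; lia.
have ixy : incomp x y by apply: (incompI _ nxy nyx); apply: contraTneq hxy => ->; rewrite ltnn.
have [e ey iex] := below_escape hxy nxy.
have hyx : (ht_above y < ht_above x)%N.
  by move: (spine_height xS) (spine_height yS) hxy; lia.
have [c xc icy] := above_escape hyx nxy.
have [/comparable_ltgtP[ec|ce|ece]|iec] := boolP (e >=< c).
- by apply: (no_obs2 Hitov xc ey ec); rewrite // incompC.
- by move: nxy; rewrite (lt_trans xc (lt_trans ce ey)).
- by move: nxy; rewrite (lt_trans xc) // -ece.
- apply: (no_obs1 Hitov ey xc iex (ncomparable_incomp iec)); by rewrite incompC.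
Qed.

Lemma spine_incomp x y : x \in spine -> y \in spine -> incomp x y ->
  ht_below x = ht_below y.
Proof.
move=> xS yS ixy; case: (ltngtP (ht_below x) (ht_below y)) => // h.
- by move: (spine_lt xS yS h); rewrite (incomp_lt ixy).
- by move: (spine_lt yS xS h); rewrite (incomp_gt ixy).
Qed.

Lemma spine_trunk : trunk spine.
Proof.
move=> x y z xS yS zS nxz ixy iyz.
have hxz := etrans (spine_incomp xS yS ixy) (spine_incomp yS zS iyz).
by apply: (incompI nxz); apply/negP => /lt_ht_below; rewrite hxz ltnn.
Qed.

(* Strict lower and upper bounds of a spine point y are shared by every spine
   point z ~ y: a failure would again complete an obstruction. *)
Lemma spine_reg_below x y z : y \in spine -> z \in spine -> incomp y z ->
  x < y -> x < z.
Proof.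
move=> yS zS iyz xy; apply: contraT => nxz; exfalso.
have hxz : (ht_below x < ht_below z)%N by rewrite -(spine_incomp yS zS iyz) lt_ht_below.
have [e ez iex] := below_escape hxz nxz.
have ixz : incomp x z.
  apply: (incompI _ nxz); first by apply: contraTneq xy => ->; rewrite (incomp_gt iyz).
  by apply/negP => zx; move: (incomp_gt iyz); rewrite (lt_trans zx xy).
have [ey|ney] := boolP (e < y).
  by apply: (no_obs2 Hitov xy ez ey); rewrite // incompC.
have iye : incomp y e.
  apply: (incompI _ _ ney); first by apply: contraTneq ez => <-; rewrite (incomp_lt iyz).
  by apply/negP => ye; move: (incomp_lt iyz); rewrite (lt_trans ye ez).
by apply: (no_obs1 Hitov xy ez _ ixz iye iyz); rewrite incompC.
Qed.

Lemma spine_reg_above x y z : y \in spine -> z \in spine -> incomp y z ->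
  y < x -> z < x.
Proof.
move=> yS zS iyz yx; apply: contraT => nzx; exfalso.
have hzx : (ht_above x < ht_above z)%N.
  move: (spine_height yS) (spine_height zS) (spine_incomp yS zS iyz) (lt_ht_above yx).
  by lia.
have [c zc icx] := above_escape hzx nzx.
have izx : incomp z x.
  apply: (incompI _ nzx); first by apply: contraTneq yx => <-; rewrite (incomp_lt iyz).
  by apply/negP => xz; move: (incomp_lt iyz); rewrite (lt_trans yx xz).
have [yc|nyc] := boolP (y < c).
  by apply: (no_obs2 Hitov zc yx yc); rewrite // incompC.
have iyc : incomp y c.
  apply: (incompI _ nyc); first by apply: contraTneq zc => <-; rewrite (incomp_gt iyz).
  by apply/negP => cy; move: (incomp_gt iyz); rewrite (lt_trans zc cy).
by apply: (no_obs1 Hitov yx zc iyz iyc); rewrite incompC.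
Qed.

Lemma spine_regular x : x \notin spine -> regular x spine.
Proof.
move=> xnS y z yS zS /orP[/eqP<-|iyz]; first by split.
have izy : incomp z y by rewrite incompC.
have lt_eq : (x < y) = (x < z).
  by apply/idP/idP; [exact: spine_reg_below yS zS iyz | exact: spine_reg_below zS yS izy].
have gt_eq : (y < x) = (z < x).
  by apply/idP/idP; [exact: spine_reg_above yS zS iyz | exact: spine_reg_above zS yS izy].
have [nxy nxz] : (x == y) = false /\ (x == z) = false.
  by split; apply: contraNF xnS => /eqP->.
by split=> //; rewrite !incompE nxy nxz lt_eq gt_eq.
Qed.

Lemma spine_full_trunk : full_trunk spine.
Proof.
split; first exact: spine_trunk.
case: height_witness => C cC hC; exists C; split.
  by split=> [|C' /chainP /le_height]; [apply/chainP | rewrite hC].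
by apply/subsetP => x; apply: max_chain_spine.
Qed.

(* The spine contains every full trunk, hence is the relatively maximum one. *)
Lemma spine_rel_max : rel_max_full_trunk spine.
Proof.
have spine_max : incl_max_full_trunk spine.
  split=> [|R' fR' sub]; first exact: spine_full_trunk.
  by apply/eqP; rewrite eqEsubset full_trunk_sub_spine.
split=> // R' [fR' maxR']; apply/esym/maxR'; first exact: spine_full_trunk.
exact: full_trunk_sub_spine.
Qed.

End Itov.
End Theorem5.

Theorem theorem5 (disp : Order.disp_t) (T : finPOrderType disp) :
  itov [set: T] <->
  exists R : {set T},
    [/\ rel_max_full_trunk R,
        itov (~: R),
        (forall x, x \in ~: R -> regular x R)
      & ~ (exists S : {set T},
             [/\ obs_set S, S :&: R != set0 & (1 < #|S :\: R|)%N])].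
Proof.
split=> [Hitov|[R [[[[tR _] _] _] itovC regR no_mixed]]].
  exists spine; split.
  - exact: spine_rel_max.
  - by case=> S [_ oS]; apply: Hitov; exists S; rewrite subsetT.
  - by move=> x; rewrite inE; apply: spine_regular.
  - by case=> S [oS _ _]; apply: Hitov; exists S; rewrite subsetT.
case=> S [_ oS].
exact: no_obs_near_trunk tR regR (obs_outside_le1 itovC no_mixed oS) oS.
Qed.
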